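(* Let $H$ be an $n\times n$ Hermitian matrix and let $M=H+aJ$, where $a$ is a real number and $J$ is the $n\times n$ all-ones matrix. Let $\tau_1<\tau_2<\cdots<\tau_r$ be the distinct main eigenvalues of $H$, let $\beta_i$ be the main angle of $\tau_i$ (as an eigenvalue of $H$), and let $\mu_1<\mu_2<\cdots<\mu_s$ be the distinct main eigenvalues of $M$. Then $r=s$, and \[ \prod_{i=1}^r(\mu_i-x)=\prod_{i=1}^r(\tau_i-x)\Big(1+a\sum_{j=1}^r\frac{n\beta_j^2}{\tau_j-x}\Big). \] Moreover, if $a>0$ then $\tau_1<\mu_1<\tau_2<\mu_2<\cdots<\tau_r<\mu_r$, and if $a<0$ then $\mu_1<\tau_1<\mu_2<\tau_2<\cdots<\mu_r<\tau_r$.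
   Context: For an $n\times n$ Hermitian matrix $H$ with distinct eigenvalues $\theta_1<\cdots<\theta_t$, let $E_i$ be the orthogonal projection onto the eigenspace of $\theta_i$ and let $j$ be the all-ones column vector of length $n$. The main angle of $\theta_i$ is $\beta_i=\frac{1}{\sqrt n}\sqrt{(E_ij)^*(E_ij)}$, where $^*$ denotes conjugate transpose. The eigenvalue $\theta_i$ is called main if $\beta_i\neq 0$. *)

From HB Require Import structures.
From mathcomp Require Import all_boot all_order all_algebra all_field.
Set Implicit Arguments. Unset Strict Implicit. Unset Printing Implicit Defensive.
Import Order.TTheory GRing.Theory Num.Theory.
From mathcomp Require Import algC.
Local Open Scope ring_scope.

Definition ctr (m n : nat) (A : 'M[algC]_(m, n)) : 'M[algC]_(n, m) :=
  (map_mx Num.conj_op A)^T.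

Definition herm_mx (n : nat) (H : 'M[algC]_n) : bool := ctr H == H.

Definition Jmx (n : nat) : 'M[algC]_n := const_mx 1.
Definition jvec (n : nat) : 'cV[algC]_n := const_mx 1.

(* A matrix X whose columns form a basis of the (column) eigenspace
   { x : H x = th x } (rows of X^T are a basis of the row kernel of (H - th)^T). *)
Definition eigbasis (n : nat) (H : 'M[algC]_n) (th : algC) :=
  (row_base (kermx ((H - th%:M)^T)))^T.

(* Orthogonal projection onto the eigenspace of th:  E = X (X^* X)^{-1} X^*.
   (If th is not an eigenvalue, X has no columns and E = 0.) *)
Definition eigproj (n : nat) (H : 'M[algC]_n) (th : algC) : 'M[algC]_n :=
  let X := eigbasis H th in X *m invmx (ctr X *m X) *m ctr X.

Definition main_angle (n : nat) (H : 'M[algC]_n) (th : algC) : algC :=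
  let v := eigproj H th *m jvec n in
  sqrtC ((ctr v *m v) ord0 ord0) / sqrtC n%:R.

Definition main_eig (n : nat) (H : 'M[algC]_n) (th : algC) : bool :=
  eigenvalue H th && (main_angle H th != 0).

From HB Require Import structures.
From mathcomp Require Import all_boot all_order all_algebra all_field.
From mathcomp Require Import sesquilinear spectral ring zify.
Import Order.TTheory GRing.Theory Num.Theory.
From mathcomp Require Import algC.
Local Open Scope ring_scope.
Set Implicit Arguments. Unset Strict Implicit. Unset Printing Implicit Defensive.

(** Write [j = \sum_i w_i] with [w_i = E_i j] the projections of [j] onto the
  main eigenspaces of [H] ([H] is unitarily diagonalisable, and [E_i j = 0] for
  the other eigenvalues), so that [c_i := w_i^* w_i = n beta_i^2 > 0].  Since
  [M = H + a j j^*], projecting [M v = x v] onto the [i]-th main eigenspace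
  gives [(tau_i - x) E_i v = - a (j^* v) w_i]; hence the main eigenvalues of [M]
  are exactly the [x] outside [{tau_i}] with [1 + a \sum_i c_i / (tau_i - x) = 0],
  i.e. the roots of the monic degree-[r] polynomial
  [G = \prod_i (X - tau_i) - a \sum_k c_k \prod_(i != k) (X - tau_i)].
  Its values [G(tau_k) = - a c_k \prod_(i != k) (tau_k - tau_i)] alternate in
  sign, so [G] has a root in each gap [(tau_k, tau_(k+1))] and one more beyond
  [tau_r] if [a > 0] (below [tau_1] if [a < 0]).  These are all [r] roots of
  [G], so [r = s], the roots interlace, and [G = \prod_i (X - mu_i)]. *)

Section ConjTranspose.
Implicit Types (m n p : nat).

Lemma ctrK m n (A : 'M[algC]_(m, n)) : ctr (ctr A) = A.
Proof. by apply/matrixP => i j; rewrite !mxE conjCK. Qed.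

Lemma ctrM m n p (A : 'M[algC]_(m, n)) (B : 'M[algC]_(n, p)) :
  ctr (A *m B) = ctr B *m ctr A.
Proof.
apply/matrixP => i j; rewrite !mxE rmorph_sum; apply: eq_bigr => k _.
by rewrite !mxE rmorphM mulrC.
Qed.

Lemma ctrD m n (A B : 'M[algC]_(m, n)) : ctr (A + B) = ctr A + ctr B.
Proof. by apply/matrixP => i j; rewrite !mxE rmorphD. Qed.

Lemma ctrZ m n (a : algC) (A : 'M[algC]_(m, n)) : ctr (a *: A) = a^* *: ctr A.
Proof. by apply/matrixP => i j; rewrite !mxE rmorphM. Qed.

Lemma ctr0 m n : ctr (0 : 'M[algC]_(m, n)) = 0.
Proof. by apply/matrixP => i j; rewrite !mxE rmorph0. Qed.

Lemma ctr_sum m n (I : finType) (F : I -> 'M[algC]_(m, n)) :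
  ctr (\sum_i F i) = \sum_i ctr (F i).
Proof. exact: (big_morph _ (@ctrD m n) (@ctr0 m n)). Qed.

Lemma ctr_inv n (A : 'M[algC]_n) : ctr (invmx A) = invmx (ctr A).
Proof. by rewrite /ctr (map_invmx Num.conj_op) trmx_inv. Qed.

Lemma gram_eq0 m n (Z : 'M[algC]_(m, n)) : ctr Z *m Z = 0 -> Z = 0.
Proof.
move=> /matrixP ZZ0; apply/matrixP => i j; rewrite mxE.
have /eqP := ZZ0 j j; rewrite !mxE psumr_eq0 => [/allP /(_ i) |k _]; last first.
  by rewrite !mxE mulrC -normCK exprn_ge0.
rewrite mem_index_enum => /(_ isT) /implyP /(_ isT).
by rewrite !mxE mulrC -normCK sqrf_eq0 normr_eq0 => /eqP.
Qed.

Lemma mx11_eq0 (Z : 'M[algC]_1) : (Z == 0) = (Z 0 0 == 0).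
Proof.
apply/eqP/eqP => [-> | Z00]; first by rewrite mxE.
by apply/matrixP => i k; rewrite !ord1 Z00 mxE.
Qed.

Lemma cnorm2_ge0 m (v : 'cV[algC]_m) : 0 <= (ctr v *m v) 0 0.
Proof.
by rewrite !mxE sumr_ge0 // => k _; rewrite !mxE mulrC -normCK exprn_ge0.
Qed.

Lemma cnorm2_eq0 m (v : 'cV[algC]_m) : ((ctr v *m v) 0 0 == 0) = (v == 0).
Proof.
rewrite -mx11_eq0; apply/eqP/eqP => [/gram_eq0 // | ->].
by rewrite mulmx0.
Qed.

End ConjTranspose.

Section EigenProjection.
Variables (n : nat) (A : 'M[algC]_n) (th : algC).
Local Notation K := (kermx ((A - th%:M)^T)).
Local Notation B := (row_base K).
Local Notation X := (eigbasis A th).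
Local Notation P := (eigproj A th).

Lemma mulmx_eigbasis : A *m X = th *: X.
Proof.
have BK0 : B *m (A - th%:M)^T = 0 by apply/sub_kermxP; rewrite eq_row_base.
have := congr1 trmx BK0; rewrite trmx_mul trmxK trmx0 mulmxBl mul_scalar_mx.
by move/eqP; rewrite subr_eq0 => /eqP.
Qed.

Lemma eigbasis_mulmx_eq0 p (y : 'M[algC]_(\rank K, p)) : X *m y = 0 -> y = 0.
Proof.
move=> Xy0; have : y^T *m B = 0 by rewrite -[B]trmxK -trmx_mul Xy0 trmx0.
move/eqP; rewrite mulmx_free_eq0 ?row_base_free // => /eqP yT0.
by rewrite -[y]trmxK yT0 trmx0.
Qed.

Lemma eigbasis_span (v : 'cV[algC]_n) : A *m v = th *: v ->
  v = X *m (v^T *m pinvmx B)^T.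
Proof.
move=> Av; have vB : (v^T <= B)%MS.
  rewrite eq_row_base; apply/sub_kermxP.
  by rewrite -trmx_mul mulmxBl Av mul_scalar_mx subrr trmx0.
by rewrite /eigbasis -trmx_mul mulmxKpV // trmxK.
Qed.

Lemma eigbasis_gram_unit : ctr X *m X \in unitmx.
Proof.
rewrite -row_free_unit -kermx_eq0; apply/eqP/row_matrixP => i.
set u := row i _.
have uG0 : u *m (ctr X *m X) = 0 by rewrite /u -row_mul mulmx_ker row0.
have : ctr (X *m ctr u) *m (X *m ctr u) = 0.
  by rewrite ctrM ctrK mulmxA -(mulmxA u) uG0 mul0mx.
move=> /gram_eq0 /eigbasis_mulmx_eq0 u0.
by rewrite row0 -[u]ctrK u0 ctr0.
Qed.

Lemma eigprojE : P = X *m invmx (ctr X *m X) *m ctr X.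
Proof. by []. Qed.

Lemma ctr_eigproj : ctr P = P.
Proof. by rewrite eigprojE !ctrM ctrK ctr_inv ctrM ctrK mulmxA. Qed.

Lemma eigproj_eigbasis : P *m X = X.
Proof. by rewrite eigprojE -!mulmxA (mulVmx eigbasis_gram_unit) mulmx1. Qed.

Lemma eigproj_eigvec (v : 'cV[algC]_n) : A *m v = th *: v -> P *m v = v.
Proof. by move=> /eigbasis_span ->; rewrite mulmxA eigproj_eigbasis. Qed.

Lemma eigproj_idem : P *m P = P.
Proof. by rewrite {2}eigprojE !mulmxA eigproj_eigbasis -eigprojE. Qed.

Lemma mulmx_eigproj : A *m P = th *: P.
Proof. by rewrite eigprojE !mulmxA mulmx_eigbasis -!scalemxAl. Qed.

Lemma eigproj_orth (v : 'cV[algC]_n) : ctr X *m v = 0 -> P *m v = 0.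
Proof. by move=> Xv0; rewrite eigprojE -[_ *m v]mulmxA Xv0 mulmx0. Qed.

End EigenProjection.

Section MainEigenvalue.
Variables (n : nat) (A : 'M[algC]_n) (th : algC).
Local Notation P := (eigproj A th).
Local Notation j := (jvec n).

Lemma main_angle_sqr : n%:R * main_angle A th ^+ 2 = (ctr (P *m j) *m (P *m j)) 0 0.
Proof.
rewrite /main_angle; case: n A => [|n'] A' /=; first by rewrite mul0r !mxE big_ord0.
by rewrite expr_div_n !sqrtCK mulrC divfK // pnatr_eq0.
Qed.

Lemma main_eigE : main_eig A th = (P *m j != 0).
Proof.
rewrite /main_eig; have [Pj0 | Pj_neq0] := eqVneq (P *m j) 0.
  by rewrite /main_angle Pj0 mulmx0 mxE sqrtC0 mul0r eqxx andbF.
have n_neq0 : n != 0%N.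
  apply: contra_neq Pj_neq0 => n0; apply/matrixP => -[i lt_in] ?.
  by exfalso; move: lt_in; rewrite n0.
apply/andP; split.
  rewrite /eigenvalue /eigenspace kermx_eq0 row_free_unit; apply/negP => unitB.
  have BPj0 : (A - th%:M) *m (P *m j) = 0.
    by rewrite mulmxBl mul_scalar_mx mulmxA mulmx_eigproj -scalemxAl subrr.
  by move: Pj_neq0; rewrite -(mulKmx unitB (P *m j)) BPj0 mulmx0 eqxx.
rewrite /main_angle mulf_eq0 negb_or sqrtC_eq0 invr_eq0 sqrtC_eq0 pnatr_eq0.
by rewrite n_neq0 cnorm2_eq0 Pj_neq0.
Qed.

Lemma main_angle_sqr_gt0 : main_eig A th -> 0 < n%:R * main_angle A th ^+ 2.
Proof. by rewrite main_angle_sqr lt_def cnorm2_ge0 cnorm2_eq0 main_eigE andbT. Qed.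

Lemma ctr_jvec_eigproj : ctr j *m P = ctr (P *m j).
Proof. by rewrite ctrM ctr_eigproj. Qed.

Lemma main_eigP :
  reflect (exists v : 'cV_n, A *m v = th *: v /\ ctr j *m v != 0) (main_eig A th).
Proof.
rewrite main_eigE; apply: (iffP idP) => [Pj_neq0 | [v [Av jv_neq0]]].
  exists (P *m j); split; first by rewrite mulmxA mulmx_eigproj scalemxAl.
  by rewrite -{1}eigproj_idem -mulmxA mulmxA ctr_jvec_eigproj mx11_eq0 cnorm2_eq0.
apply: contraNneq jv_neq0 => Pj0.
by rewrite -(eigproj_eigvec Av) mulmxA ctr_jvec_eigproj Pj0 ctr0 mul0mx.
Qed.

End MainEigenvalue.

Section Hermitian.
Variables (n : nat) (A : 'M[algC]_n).
Hypothesis A_herm : ctr A = A.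

Lemma herm_eigval_real (th : algC) (v : 'cV[algC]_n) :
  A *m v = th *: v -> v != 0 -> th \is Num.real.
Proof.
move=> Av v_neq0.
have vAv : ctr v *m (A *m v) = th *: (ctr v *m v) by rewrite Av scalemxAr.
have vAv' : ctr v *m (A *m v) = th^* *: (ctr v *m v).
  by rewrite mulmxA -{1}A_herm -ctrM Av ctrZ scalemxAl.
have /eqP := etrans (esym vAv) vAv'.
rewrite -subr_eq0 -scalerBl scaler_eq0 subr_eq0 mx11_eq0 cnorm2_eq0.
by rewrite (negbTE v_neq0) orbF CrealE eq_sym.
Qed.

Lemma herm_main_eig_real (th : algC) : main_eig A th -> th \is Num.real.
Proof.
rewrite main_eigE => Pj_neq0; apply: herm_eigval_real Pj_neq0.
by rewrite mulmxA mulmx_eigproj scalemxAl.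
Qed.

Lemma eigproj_mulmx (th : algC) : th \is Num.real ->
  eigproj A th *m A = th *: eigproj A th.
Proof.
move=> /CrealP th_real.
by rewrite -[_ *m A]ctrK ctrM A_herm ctr_eigproj mulmx_eigproj ctrZ ctr_eigproj th_real.
Qed.

Lemma eigproj_eigvec_neq (th th' : algC) (v : 'cV[algC]_n) : th' \is Num.real ->
  A *m v = th' *: v -> th != th' -> eigproj A th *m v = 0.
Proof.
move=> /CrealP th'_real Av th_neq; apply: eigproj_orth.
set X := eigbasis A th.
have XAv : ctr X *m (A *m v) = th' *: (ctr X *m v) by rewrite Av scalemxAr.
have XAv' : ctr X *m (A *m v) = th^* *: (ctr X *m v).
  have AX : ctr (A *m X) = ctr X *m A by rewrite ctrM A_herm.
  by rewrite mulmxA -AX mulmx_eigbasis ctrZ scalemxAl.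
have /eqP := etrans (esym XAv) XAv'.
rewrite -subr_eq0 -scalerBl scaler_eq0 subr_eq0 => /orP[/eqP th_conj | /eqP //].
by move: th_neq; rewrite -th'_real th_conj conjCK eqxx.
Qed.

End Hermitian.

Section Spectral.
Variables (n : nat) (H : 'M[algC]_n).
Hypothesis H_herm : ctr H = H.
Local Notation U := (spectralmx H).
Local Notation d := (spectral_diag H).

Lemma herm_hermsymmx : H \is hermsymmx.
Proof. by apply/is_hermitianmxP; rewrite expr0 scale1r -{1}H_herm /ctr map_trmx. Qed.

Lemma spectral_mulmx_ctr : U *m ctr U = 1%:M.
Proof. by have /unitarymxP := spectral_unitarymx H; rewrite -map_trmx. Qed.

Lemma herm_mulmx_spectral_ctr : H *m ctr U = ctr U *m diag_mx d.
Proof.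
have /orthomx_spectralP H_spec := hermitian_normalmx herm_hermsymmx.
rewrite {1}H_spec invmx_unitary ?spectral_unitarymx // -map_trmx -/(ctr U).
by rewrite -!mulmxA spectral_mulmx_ctr mulmx1.
Qed.

Lemma herm_spectral_col k : H *m col k (ctr U) = d 0 k *: col k (ctr U).
Proof.
rewrite !colE mulmxA herm_mulmx_spectral_ctr -mulmxA scalemxAr; congr (_ *m _).
rewrite mul_diag_mx; apply/matrixP => i z; rewrite !mxE.
by case: (eqVneq k i) => [-> | ne]; rewrite ?mulr0 //= andbF mulr0n mulr0.
Qed.

Lemma spectral_diag_real k : d 0 k \is Num.real.
Proof. by have /mxOverP := hermitian_spectral_diag_real herm_hermsymmx; apply. Qed.

Lemma spectral_coord_decomp (v : 'cV[algC]_n) :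
  v = \sum_k (ctr (col k (ctr U)) *m v) 0 0 *: col k (ctr U).
Proof.
rewrite -{1}[v]mul1mx -(mulmx1C spectral_mulmx_ctr) -mulmxA.
apply/matrixP => i z; rewrite summxE !mxE; apply: eq_bigr => k _.
rewrite !mxE mulrC (ord1 z); congr (_ * _); apply: eq_bigr => l _.
by rewrite !mxE conjCK.
Qed.

(* Expand [j] along the orthonormal eigenvectors [col k (ctr U)]: one with a
   main eigenvalue [tau_i] is fixed by [E_i] and killed by the other [E_l],
   and one with a non-main eigenvalue is orthogonal to [j]. *)
Lemma jvec_main_eigproj_sum (tau : seq algC) : uniq tau ->
  (forall x, (x \in tau) = main_eig H x) ->
  jvec n = \sum_(i < size tau) eigproj H tau`_i *m jvec n.
Proof.
move=> tau_uniq tauE.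
rewrite (eq_bigr _ (fun i _ => congr1 (mulmx _) (spectral_coord_decomp _))).
under eq_bigr do rewrite mulmx_sumr.
rewrite exchange_big /= [LHS]spectral_coord_decomp; apply: eq_bigr => k _.
under eq_bigr do rewrite -scalemxAr; rewrite -scaler_sumr.
have [dk_tau | dk_ntau] := boolP (d 0 k \in tau).
  pose i0 : 'I_(size tau) := Ordinal (etrans (index_mem (d 0 k) tau) dk_tau).
  rewrite (bigD1 i0) //= nth_index // eigproj_eigvec ?herm_spectral_col //.
  rewrite big1 ?addr0 // => i i_neq.
  apply: (eigproj_eigvec_neq H_herm (spectral_diag_real k) (herm_spectral_col k)).
  apply: contra i_neq => /eqP tau_i; apply/eqP/val_inj => /=.
  by rewrite -tau_i index_uniq.
suff -> : (ctr (col k (ctr U)) *m jvec n) 0 0 = 0 by rewrite !scale0r.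
move: dk_ntau; rewrite tauE main_eigE negbK => /eqP Pj0.
rewrite -(eigproj_eigvec (herm_spectral_col k)) ctrM ctr_eigproj -mulmxA Pj0.
by rewrite mulmx0 mxE.
Qed.

End Spectral.

Section RankOnePerturbation.
Variables (n : nat) (H : 'M[algC]_n) (a : algC) (tau : seq algC).
Hypotheses (H_herm : ctr H = H) (tau_uniq : uniq tau)
  (tauE : forall x, (x \in tau) = main_eig H x).
Local Notation j := (jvec n).
Local Notation r := (size tau).
Let w i := eigproj H tau`_i *m j.
Let c i := (ctr (w i) *m w i) 0 0.
Local Notation M := (H + a *: Jmx n).

Lemma perturb_mulmx (v : 'cV_n) : M *m v = H *m v + (a * (ctr j *m v) 0 0) *: j.
Proof.
have -> : Jmx n = j *m ctr j.
  by apply/matrixP => i k; rewrite !mxE big_ord1 !mxE rmorph1 mulr1.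
rewrite mulmxDl -scalemxAl -mulmxA [ctr j *m v]mx11_scalar mul_mx_scalar.
by rewrite scalerA [_%:M 0 0]mxE mulr1n.
Qed.

Lemma main_proj_neq0 i : (i < r)%N -> w i != 0.
Proof. by move=> lt_ir; rewrite /w -main_eigE -tauE mem_nth. Qed.

Lemma mulmx_main_proj i : H *m w i = tau`_i *: w i.
Proof. by rewrite /w mulmxA mulmx_eigproj scalemxAl. Qed.

Lemma ctr_jvec_main_proj i : ctr j *m w i = (c i)%:M.
Proof.
have -> : ctr j *m w i = ctr (w i) *m w i.
  by rewrite -ctr_jvec_eigproj -mulmxA (mulmxA (eigproj _ _)) eigproj_idem.
exact: mx11_scalar.
Qed.

Lemma ctr_jvec_sum : ctr j = \sum_(i < r) ctr (w i).
Proof. by rewrite {1}(jvec_main_eigproj_sum H_herm tau_uniq tauE) ctr_sum. Qed.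

Lemma tau_sub_neq0 x (i : 'I_r) : x \notin tau -> tau`_i - x != 0.
Proof.
by move=> x_ntau; rewrite subr_eq0; apply: contraNneq x_ntau => <-; rewrite mem_nth.
Qed.

Lemma perturb_eigvec_proj x (v : 'cV_n) i : (i < r)%N -> M *m v = x *: v ->
  (tau`_i - x) *: (eigproj H tau`_i *m v) = - (a * (ctr j *m v) 0 0) *: w i.
Proof.
move=> lt_ir; rewrite perturb_mulmx => Mv.
have tau_real : tau`_i \is Num.real by rewrite (herm_main_eig_real H_herm) -?tauE ?mem_nth.
have := congr1 (mulmx (eigproj H tau`_i)) Mv; rewrite /w.
rewrite mulmxDr mulmxA (eigproj_mulmx H_herm tau_real) -!scalemxAr -scalemxAl.
by move=> PMv; rewrite scalerBl -PMv opprD addrA subrr add0r scaleNr.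
Qed.

Lemma perturb_main_eig_secular x : a != 0 -> main_eig M x ->
  x \notin tau /\ 1 + a * \sum_(i < r) c i / (tau`_i - x) = 0.
Proof.
move=> a_neq0 /main_eigP[v [Mv]]; rewrite mx11_eq0; set s := (_ *m v) 0 0 => s_neq0.
have x_ntau : x \notin tau.
  apply/negP => x_tau; have lt_ir : (index x tau < r)%N by rewrite index_mem.
  have w_neq0 := main_proj_neq0 lt_ir.
  have := perturb_eigvec_proj lt_ir Mv; rewrite nth_index // in w_neq0 *.
  rewrite subrr scale0r => /esym/eqP; rewrite scaler_eq0 oppr_eq0 !mulf_eq0.
  by rewrite (negbTE a_neq0) (negbTE s_neq0) (negbTE w_neq0).
have Pv (i : 'I_r) : eigproj H tau`_i *m v = (- (a * s) / (tau`_i - x)) *: w i.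
  rewrite mulrC -scalerA -(perturb_eigvec_proj (ltn_ord i) Mv) scalerA.
  by rewrite mulVf ?scale1r ?tau_sub_neq0.
have sE : s = \sum_(i < r) (- (a * s) / (tau`_i - x)) * c i.
  rewrite [in LHS]/s ctr_jvec_sum mulmx_suml summxE; apply: eq_bigr => i _.
  rewrite /w ctrM ctr_eigproj -mulmxA Pv -scalemxAr -/(w i) ctr_jvec_main_proj.
  by rewrite !mxE eqxx mulr1n.
have : s * (1 + a * \sum_(i < r) c i / (tau`_i - x)) = 0.
  rewrite mulrDr mulr1 {1}sE mulr_sumr mulr_sumr -big_split /=.
  by apply: big1 => i _; ring.
by move/eqP; rewrite mulf_eq0 (negbTE s_neq0) => /eqP.
Qed.

Lemma secular_perturb_main_eig x : x \notin tau ->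
  1 + a * \sum_(i < r) c i / (tau`_i - x) = 0 -> main_eig M x.
Proof.
move=> x_ntau secular0; set S := \sum_(i < r) _ in secular0.
pose v := \sum_(i < r) (tau`_i - x)^-1 *: w i.
have jv : (ctr j *m v) 0 0 = S.
  rewrite /v mulmx_sumr summxE; apply: eq_bigr => i _.
  by rewrite -scalemxAr ctr_jvec_main_proj !mxE eqxx mulr1n mulrC.
have Hv : H *m v = x *: v + j.
  rewrite [in RHS](jvec_main_eigproj_sum H_herm tau_uniq tauE) /v mulmx_sumr.
  rewrite scaler_sumr -big_split /=; apply: eq_bigr => i _.
  rewrite -/(w i) -scalemxAr mulmx_main_proj !scalerA -{3}[w i]scale1r -scalerDl.
  congr (_ *: _); rewrite -(divff (tau_sub_neq0 i x_ntau)) mulrC -mulrDl.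
  by rewrite [x + _]addrC subrK.
apply/main_eigP; exists v; split.
  by rewrite perturb_mulmx jv Hv -addrA -{1}[j]scale1r -scalerDl secular0 scale0r addr0.
rewrite mx11_eq0 jv; apply: contra_eqN secular0 => /eqP ->.
by rewrite mulr0 addr0 oner_eq0.
Qed.

Lemma perturb_main_eigE x : a != 0 -> main_eig M x = (x \notin tau) &&
  (1 + a * \sum_(i < r) n%:R * main_angle H tau`_i ^+ 2 / (tau`_i - x) == 0).
Proof.
move=> a_neq0; under eq_bigr do rewrite main_angle_sqr -/(w _) -/(c _).
apply/idP/andP => [/(perturb_main_eig_secular a_neq0)[-> ->] //|].
by move=> [x_ntau /eqP]; apply: secular_perturb_main_eig.
Qed.

End RankOnePerturbation.

Section RealRootLocation.
Variable R : numDomainType.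
Implicit Types (s : seq R) (y : R).

Lemma prod_subr_sign s y :
  \prod_(z <- s) (z - y) = (-1) ^+ size s * \prod_(z <- s) (y - z).
Proof.
elim: s => [|z s IHs]; first by rewrite !big_nil expr0 mulr1.
by rewrite !big_cons IHs /= exprS -opprB; ring.
Qed.

Lemma prod_sign_change_root s y1 y2 :
  y1 \is Num.real -> y2 \is Num.real -> {in s, forall z, z \is Num.real} ->
  y1 < y2 -> (\prod_(z <- s) (y1 - z)) * (\prod_(z <- s) (y2 - z)) < 0 ->
  exists2 z, z \in s & y1 < z < y2.
Proof.
move=> y1_real y2_real s_real lt_y12.
have [/hasP[z z_s z_in] | no_root] := boolP (has (fun z => y1 < z < y2) s).
  by exists z.
rewrite -big_split /= big_seq le_gtF //; apply: prodr_ge0 => z z_s.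
have z_real := s_real z z_s.
have [le_zy1 | lt_y1z] := real_leP z_real y1_real.
  by apply: mulr_ge0; rewrite subr_ge0 // (le_trans le_zy1 (ltW lt_y12)).
have [le_y2z | lt_zy2] := real_leP y2_real z_real.
  by apply: mulr_le0; rewrite subr_le0 // ltW // (lt_le_trans lt_y12 le_y2z).
by case/negP: no_root; apply/hasP; exists z; rewrite ?lt_y1z.
Qed.

Lemma prod_neg_root_gt s y : y \is Num.real -> {in s, forall z, z \is Num.real} ->
  \prod_(z <- s) (y - z) < 0 -> exists2 z, z \in s & y < z.
Proof.
move=> y_real s_real; have [/hasP[z z_s lt_yz] | no_root] := boolP (has (> y) s).
  by exists z.
rewrite big_seq le_gtF //; apply: prodr_ge0 => z z_s.
rewrite subr_ge0; have [// | lt_yz] := real_leP (s_real z z_s) y_real.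
by case/negP: no_root; apply/hasP; exists z.
Qed.

Lemma prod_neg_root_lt s y : y \is Num.real -> {in s, forall z, z \is Num.real} ->
  \prod_(z <- s) (z - y) < 0 -> exists2 z, z \in s & z < y.
Proof.
move=> y_real s_real; have [/hasP[z z_s lt_zy] | no_root] := boolP (has (< y) s).
  by exists z.
rewrite big_seq le_gtF //; apply: prodr_ge0 => z z_s.
rewrite subr_ge0; have [// | lt_zy] := real_leP y_real (s_real z z_s).
by case/negP: no_root; apply/hasP; exists z.
Qed.

Lemma sorted_witnesses_eq (mu : seq R) (r : nat) (P : nat -> R -> bool) :
  sorted <%R mu -> (size mu <= r)%N ->
  (forall k, (k < r)%N -> exists2 z, z \in mu & P k z) ->
  (forall k z z', (k.+1 < r)%N -> P k z -> P k.+1 z' -> z < z') ->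
  size mu = r /\ (forall k, (k < r)%N -> P k mu`_k).
Proof.
move=> mu_sorted size_mu witness P_incr.
have ex_wit k : exists z, (k < r)%N ==> (z \in mu) && P k z.
  case: (ltnP k r) => [lt_kr | _]; last by exists 0.
  by have [z z_mu Pkz] := witness k lt_kr; exists z; rewrite z_mu.
pose nu := mkseq (fun k => xchoose (ex_wit k)) r.
have nuP k : (k < r)%N -> (nu`_k \in mu) && P k nu`_k.
  by move=> lt_kr; rewrite nth_mkseq //; apply: (implyP (xchooseP (ex_wit k))).
have nu_sorted : sorted <%R nu.
  apply/(sortedP 0) => k; rewrite size_mkseq => lt_k1r.
  have /andP[_ Pk] := nuP k (ltnW lt_k1r); have /andP[_ Pk1] := nuP k.+1 lt_k1r.
  exact: P_incr Pk Pk1.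
have nu_sub : {subset nu <= mu}.
  move=> z /(nthP 0)[k]; rewrite size_mkseq => lt_kr <-.
  by have /andP[] := nuP k lt_kr.
have [|_ nu_eqi] := uniq_min_size (lt_sorted_uniq nu_sorted) nu_sub.
  by rewrite size_mkseq.
have <- : nu = mu by apply: lt_sorted_eq.
split; first by rewrite size_mkseq.
by move=> k lt_kr; have /andP[] := nuP k lt_kr.
Qed.

End RealRootLocation.

(* [node_prod k] is the derivative of [\prod_i ('X - tau_i)] at [tau_k]; for
   increasing [tau] its sign is [(-1) ^+ (size tau - 1 - k)]. *)
Definition node_prod (R : nzRingType) (tau : seq R) (k : 'I_(size tau)) : R :=
  \prod_(i < size tau | i != k) (tau`_k - tau`_i).

Section SecularPolynomial.
Variables (R : fieldType) (tau : seq R) (c : nat -> R) (a : R).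
Local Notation r := (size tau).
Local Notation t i := (tau`_i).

Definition cofactor_sum : {poly R} :=
  \sum_(k < r) c k *: \prod_(i < r | i != k) ('X - (t i)%:P).

Definition secular_poly : {poly R} :=
  \prod_(z <- tau) ('X - z%:P) - a *: cofactor_sum.

Lemma size_cofactor_sum : (size cofactor_sum <= r)%N.
Proof.
apply: leq_trans (size_sum _ _ _) _; apply/bigmax_leqP => k _.
apply: leq_trans (size_scale_leq _ _) _.
rewrite size_prod; last by move=> i _; rewrite polyXsubC_eq0.
under eq_bigr do rewrite size_XsubC.
rewrite sum_nat_const; have -> : #|(fun i : 'I_r => i != k)| = r.-1.
  by rewrite -[in RHS](card_ord r) -(cardC1 k); apply: eq_card.
by have := ltn_ord k; lia.
Qed.

Lemma size_secular_corr : (size (- (a *: cofactor_sum)) <= r)%N.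
Proof. by rewrite size_opp (leq_trans (size_scale_leq _ _)) ?size_cofactor_sum. Qed.

Lemma secular_poly_monic : secular_poly \is monic.
Proof.
rewrite monicE lead_coefDl ?size_prod_XsubC ?ltnS ?size_secular_corr //.
by rewrite -monicE monic_prod_XsubC.
Qed.

Lemma size_secular_poly : size secular_poly = r.+1.
Proof. by rewrite size_addl ?size_prod_XsubC ?ltnS ?size_secular_corr. Qed.

Lemma horner_secular_poly x : secular_poly.[x] = \prod_(i < r) (x - t i)
   - a * \sum_(k < r) c k * \prod_(i < r | i != k) (x - t i).
Proof.
rewrite hornerD hornerN hornerZ horner_prod (big_nth 0) big_mkord horner_sum.
congr (_ - _ * _); first by apply: eq_bigr => i _; rewrite hornerXsubC.
apply: eq_bigr => k _; rewrite hornerZ horner_prod.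
by congr (_ * _); apply: eq_bigr => i _; rewrite hornerXsubC.
Qed.

Lemma horner_secular_poly_notin x : x \notin tau ->
  secular_poly.[x] = \prod_(i < r) (x - t i) * (1 + a * \sum_(k < r) c k / (t k - x)).
Proof.
move=> x_ntau; rewrite horner_secular_poly.
have cofactorE (k : 'I_r) : c k * \prod_(i < r | i != k) (x - t i) =
    - \prod_(i < r) (x - t i) * (c k / (t k - x)).
  have tk_neq : t k - x != 0.
    by rewrite subr_eq0; apply: contraNneq x_ntau => <-; rewrite mem_nth.
  by rewrite [in RHS](bigD1 k) //=; field.
by rewrite (eq_bigr _ (fun k _ => cofactorE k)) -mulr_sumr; ring.
Qed.

Lemma horner_secular_poly_node (k : 'I_r) : uniq tau ->
  secular_poly.[t k] = - a * c k * node_prod k.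
Proof.
move=> tau_uniq; rewrite horner_secular_poly (bigD1 k) //= subrr mul0r sub0r.
rewrite [\sum_(i < r) _](bigD1 k) //= [\sum_(i < r | _) _]big1 ?addr0 ?mulrA ?mulNr //.
move=> i i_neq_k.
by rewrite (bigD1 k) 1?eq_sym //= subrr mul0r mulr0.
Qed.

End SecularPolynomial.

Section NodeProductSigns.
Variables (R : numDomainType) (tau : seq R).
Hypothesis tau_sorted : sorted <%R tau.
Local Notation r := (size tau).
Local Notation t i := (tau`_i).

Lemma sorted_nth_lt (i j : nat) : (i < r)%N -> (j < r)%N -> (i < j)%N -> t i < t j.
Proof. by move=> lt_ir lt_jr lt_ij; rewrite (lt_sorted_ltn_nth 0 tau_sorted). Qed.

Lemma node_prod_last_gt0 (k : 'I_r) : k.+1 = r -> 0 < node_prod k.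
Proof.
move=> k_last; apply: prodr_gt0 => i i_neq_k; rewrite subr_gt0.
apply: sorted_nth_lt => //; have : (i < k.+1)%N by rewrite k_last.
rewrite ltnS leq_eqVlt => /orP[/eqP ik | //].
by move: i_neq_k; rewrite -val_eqE /= ik eqxx.
Qed.

Lemma node_prod_first_sign (k : 'I_r) : k = 0 :> nat -> (-1) ^+ r * node_prod k < 0.
Proof.
move=> k0; rewrite /node_prod.
under eq_bigr do rewrite -opprB; rewrite prodrN.
have -> : #|(fun i : 'I_r => i != k)| = r.-1.
  by rewrite -[in RHS](card_ord r) -(cardC1 k); apply: eq_card.
have r_gt0 : (0 < r)%N by rewrite (leq_ltn_trans _ (ltn_ord k)).
rewrite mulrA -exprD; have -> : (r + r.-1 = (r.-1 + r.-1).+1)%N by lia.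
rewrite exprS exprD -expr2 sqrr_sign mulr1 mulN1r oppr_lt0; apply: prodr_gt0 => i i_neq_k.
rewrite subr_gt0 sorted_nth_lt // k0 lt0n.
by apply: contra i_neq_k => /eqP i0; apply/eqP/val_inj; rewrite /= i0 k0.
Qed.

Lemma node_prod_next_lt0 (k k' : 'I_r) : k' = k.+1 :> nat ->
  node_prod k * node_prod k' < 0.
Proof.
move=> k'_next; have k_neq : k != k' by rewrite -val_eqE /= k'_next neq_ltn ltnSn.
have lt_kk' : t k < t k' by rewrite sorted_nth_lt // k'_next.
rewrite /node_prod (bigD1 k') 1?eq_sym //= [X in _ * X](bigD1 k) //=.
have swap_cond : (fun i : 'I_r => (i != k') && (i != k)) =1
    (fun i => (i != k) && (i != k')) by move=> i; rewrite andbC.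
rewrite (eq_bigl _ _ swap_cond) mulrACA -big_split /= nmulr_rlt0; last first.
  by rewrite -opprB mulNr oppr_lt0 mulr_gt0 // subr_gt0.
apply: prodr_gt0 => i /andP[i_neq_k i_neq_k'].
have [lt_ik | lt_ki | ik] := ltngtP i k.
- by rewrite mulr_gt0 // subr_gt0 sorted_nth_lt // k'_next ltnS ltnW.
- have lt_k'i : (k' < i)%N.
    rewrite k'_next ltn_neqAle lt_ki andbT; apply: contra i_neq_k' => /eqP ik'.
    by apply/eqP/val_inj; rewrite /= k'_next ik'.
  by rewrite -mulrNN !opprB mulr_gt0 // subr_gt0 sorted_nth_lt.
- by move: i_neq_k; rewrite -val_eqE /= ik eqxx.
Qed.

End NodeProductSigns.

Section Interlacing.
Variables (R : numClosedFieldType) (tau mu : seq R) (c : nat -> R) (a : R).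
Hypotheses (a_real : a \is Num.real) (a_neq0 : a != 0).
Hypotheses (tau_sorted : sorted <%R tau)
  (tau_real : forall i, (i < size tau)%N -> tau`_i \is Num.real)
  (c_gt0 : forall i, (i < size tau)%N -> 0 < c i).
Hypotheses (mu_sorted : sorted <%R mu) (mu_real : {in mu, forall x, x \is Num.real})
  (muE : forall x, (x \in mu) =
     (x \notin tau) && (1 + a * \sum_(i < size tau) c i / (tau`_i - x) == 0)).
Local Notation r := (size tau).
Local Notation t i := (tau`_i).
Local Notation G := (secular_poly tau c a).

Let tau_uniq : uniq tau := lt_sorted_uniq tau_sorted.

Lemma node_prod_neq0 (k : 'I_r) : node_prod k != 0.
Proof.
rewrite prodf_seq_neq0; apply/allP => i _; apply/implyP => i_neq_k.
rewrite subr_eq0; apply: contra i_neq_k => /eqP tki; apply/eqP/val_inj.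
by apply/eqP; rewrite -(nth_uniq 0 (ltn_ord i) (ltn_ord k) tau_uniq) tki.
Qed.

Lemma root_secular_poly x : root G x = (x \in mu).
Proof.
rewrite /root muE; have [x_tau | x_ntau] /= := boolP (x \in tau).
  pose k := Ordinal (etrans (index_mem x tau) x_tau).
  have -> : x = t k by rewrite /= nth_index.
  rewrite horner_secular_poly_node // !mulf_eq0 oppr_eq0 (negbTE a_neq0).
  by rewrite (negbTE (node_prod_neq0 k)) orbF gt_eqF ?c_gt0.
suff prod_neq0 : \prod_(i < r) (x - t i) != 0.
  by rewrite horner_secular_poly_notin // mulf_eq0 (negbTE prod_neq0).
rewrite prodf_seq_neq0; apply/allP => i _; rewrite subr_eq0.
by apply: contraNneq x_ntau => ->; rewrite mem_nth.
Qed.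

Lemma main_prod_dvd_secular : \prod_(z <- mu) ('X - z%:P) %| G.
Proof.
apply: uniq_roots_dvdp; last by rewrite uniq_rootsE (lt_sorted_uniq mu_sorted).
by apply/allP => z; rewrite root_secular_poly.
Qed.

Lemma size_main_le : (size mu <= r)%N.
Proof.
have := dvdp_leq _ main_prod_dvd_secular.
rewrite size_prod_XsubC size_secular_poly ltnS; apply.
by rewrite -size_poly_eq0 size_secular_poly.
Qed.

Lemma secular_poly_main : size mu = r -> G = \prod_(z <- mu) ('X - z%:P).
Proof.
move=> size_mu; apply/esym/eqP.
rewrite -eqp_monic ?monic_prod_XsubC ?(secular_poly_monic tau c a) //.
rewrite -dvdp_size_eqp ?main_prod_dvd_secular //.
by rewrite size_prod_XsubC size_secular_poly size_mu.
Qed.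

(* The roots of [G], counted with multiplicity, all lie in [mu]; this lets the
   intermediate value arguments below run on the linear factors of [G]. *)
Lemma secular_poly_split : exists2 s : seq R, {subset s <= mu} &
  size s = r /\ forall y, G.[y] = \prod_(z <- s) (y - z).
Proof.
have [s Gs] := closed_field_poly_normal G.
rewrite (monicP (secular_poly_monic tau c a)) scale1r in Gs.
exists s; first by move=> z z_s; rewrite -root_secular_poly Gs root_prod_XsubC.
split; first by have := size_secular_poly tau c a; rewrite Gs size_prod_XsubC => -[].
by move=> y; rewrite Gs horner_prod; apply: eq_bigr => z _; rewrite hornerXsubC.
Qed.

Lemma secular_root_gap k : (k.+1 < r)%N -> exists2 z, z \in mu & t k < z < t k.+1.
Proof.
move=> lt_k1r; have lt_kr := ltnW lt_k1r.
have [s s_mu [_ Gs]] := secular_poly_split.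
have s_real : {in s, forall z, z \is Num.real} by move=> z /s_mu /mu_real.
have lt_t : t k < t k.+1 := sorted_nth_lt tau_sorted lt_kr lt_k1r (ltnSn k).
have sign_change : (\prod_(z <- s) (t k - z)) * (\prod_(z <- s) (t k.+1 - z)) < 0.
  rewrite -!Gs (horner_secular_poly_node _ _ (Ordinal lt_kr)) //.
  rewrite (horner_secular_poly_node _ _ (Ordinal lt_k1r)) //.
  have -> : forall c1 c2 d1 d2 : R,
      - a * c1 * d1 * (- a * c2 * d2) = (a ^+ 2 * c1 * c2) * (d1 * d2) by move=> *; ring.
  have a2_gt0 : 0 < a ^+ 2 by rewrite lt_def sqrf_eq0 a_neq0 real_exprn_even_ge0.
  rewrite pmulr_rlt0 ?node_prod_next_lt0 //.
  exact: mulr_gt0 (mulr_gt0 a2_gt0 (c_gt0 lt_kr)) (c_gt0 lt_k1r).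
have [z /s_mu z_mu z_in] := prod_sign_change_root
  (tau_real lt_kr) (tau_real lt_k1r) s_real lt_t sign_change.
by exists z.
Qed.

Lemma secular_root_above : 0 < a -> (0 < r)%N -> exists2 z, z \in mu & t r.-1 < z.
Proof.
move=> a_gt0 r_gt0; have lt_r1r : (r.-1 < r)%N by rewrite prednK.
have [s s_mu [_ Gs]] := secular_poly_split.
have s_real : {in s, forall z, z \is Num.real} by move=> z /s_mu /mu_real.
have [|z /s_mu z_mu z_gt] := prod_neg_root_gt (tau_real lt_r1r) s_real.
  rewrite -Gs (horner_secular_poly_node _ _ (Ordinal lt_r1r)) // !mulNr oppr_lt0.
  by rewrite !mulr_gt0 ?c_gt0 ?node_prod_last_gt0 //= prednK.
by exists z.
Qed.

Lemma secular_root_below : a < 0 -> (0 < r)%N -> exists2 z, z \in mu & z < t 0.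
Proof.
move=> a_lt0 r_gt0; have [s s_mu [size_s Gs]] := secular_poly_split.
have s_real : {in s, forall z, z \is Num.real} by move=> z /s_mu /mu_real.
have [|z /s_mu z_mu z_lt] := prod_neg_root_lt (tau_real r_gt0) s_real.
  rewrite prod_subr_sign -Gs size_s (horner_secular_poly_node _ _ (Ordinal r_gt0)) //.
  rewrite mulrCA pmulr_rlt0 ?node_prod_first_sign //.
  by rewrite mulr_gt0 ?c_gt0 // oppr_gt0.
by exists z.
Qed.

Lemma interlacing_pos : 0 < a -> size mu = r /\ forall k, (k < r)%N ->
  (t k < mu`_k) && ((k.+1 < r)%N ==> (mu`_k < t k.+1)).
Proof.
move=> a_gt0; apply: (sorted_witnesses_eq (P := fun k z =>
  (t k < z) && ((k.+1 < r)%N ==> (z < t k.+1)))) => //; first exact: size_main_le.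
  move=> k lt_kr; have [lt_k1r | le_rk1] := ltnP k.+1 r.
    have [z z_mu /andP[lt_z z_lt]] := secular_root_gap lt_k1r.
    by exists z => //; rewrite lt_z z_lt.
  have [z z_mu z_gt] := secular_root_above a_gt0 (leq_ltn_trans (leq0n k) lt_kr).
  have r_k : k = r.-1 by lia.
  by exists z => //; rewrite r_k z_gt.
move=> k z z' lt_k1r /andP[_ z_lt] /andP[lt_z' _].
by apply: lt_trans lt_z'; rewrite lt_k1r in z_lt.
Qed.

Lemma interlacing_neg : a < 0 -> size mu = r /\ forall k, (k < r)%N ->
  (mu`_k < t k) && ((0 < k)%N ==> (t k.-1 < mu`_k)).
Proof.
move=> a_lt0; apply: (sorted_witnesses_eq (P := fun k z =>
  (z < t k) && ((0 < k)%N ==> (t k.-1 < z)))) => //; first exact: size_main_le.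
  move=> [|k] lt_kr.
    by have [z z_mu z_lt] := secular_root_below a_lt0 lt_kr; exists z; rewrite ?z_lt.
  have [z z_mu /andP[lt_z z_lt]] := secular_root_gap lt_kr.
  by exists z; rewrite /= ?lt_z ?z_lt.
by move=> k z z' _ /andP[lt_z _] /andP[_ lt_z']; apply: lt_trans lt_z'.
Qed.

Lemma size_main : size mu = r.
Proof.
move: a_neq0; rewrite real_neqr_lt ?real0 //.
by case/orP => [/interlacing_neg[] | /interlacing_pos[]].
Qed.

Lemma prod_main_sub x : x \notin tau ->
  \prod_(i < r) (mu`_i - x) =
  \prod_(i < r) (t i - x) * (1 + a * \sum_(j < r) c j / (t j - x)).
Proof.
move=> x_ntau.
have seqE (s : seq R) (F : R -> R) : \prod_(i < size s) F s`_i = \prod_(z <- s) F z.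
  by rewrite (big_nth 0) big_mkord.
have G_main : G.[x] = \prod_(z <- mu) (x - z).
  rewrite (secular_poly_main size_main) horner_prod.
  by apply: eq_bigr => z _; rewrite hornerXsubC.
rewrite -[in LHS]size_main (seqE mu (fun z => z - x)) (seqE tau (fun z => z - x)).
rewrite !prod_subr_sign size_main -G_main horner_secular_poly_notin //.
by rewrite (seqE tau (fun z => x - z)) mulrA.
Qed.

Lemma secular_interlacing :
  [/\ size mu = r,
      (forall x, x \notin tau -> \prod_(i < r) (mu`_i - x) =
         \prod_(i < r) (t i - x) * (1 + a * \sum_(j < r) c j / (t j - x))),
      (0 < a -> forall i, (i < r)%N -> t i < mu`_i /\ ((i.+1 < r)%N -> mu`_i < t i.+1)) &
      (a < 0 -> forall i, (i < r)%N -> mu`_i < t i /\ ((i.+1 < r)%N -> t i < mu`_i.+1))].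
Proof.
split; [exact: size_main | exact: prod_main_sub | |].
  move=> a_gt0 i lt_ir; have [_ /(_ i lt_ir) /andP[-> /implyP]] := interlacing_pos a_gt0.
  by [].
move=> a_lt0 i lt_ir; have [_ mu_lt] := interlacing_neg a_lt0.
have /andP[-> _] := mu_lt i lt_ir; split=> // lt_i1r.
by have /andP[_] := mu_lt i.+1 lt_i1r.
Qed.

End Interlacing.

Theorem theorem2p2 (n : nat) (H : 'M[algC]_n) (a : algC) (tau mu : seq algC) :
  herm_mx H -> a \is Num.real ->
  sorted <%R tau -> (forall x, (x \in tau) = main_eig H x) ->
  sorted <%R mu -> (forall x, (x \in mu) = main_eig (H + a *: Jmx n) x) ->
  [/\ size mu = size tau,
      (forall x : algC, x \notin tau ->
         \prod_(i < size tau) (mu`_i - x) =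
         \prod_(i < size tau) (tau`_i - x) *
           (1 + a * \sum_(j < size tau)
                      n%:R * main_angle H tau`_j ^+ 2 / (tau`_j - x))),
      (0 < a -> forall i : nat, (i < size tau)%N ->
         tau`_i < mu`_i /\ ((i.+1 < size tau)%N -> mu`_i < tau`_i.+1)) &
      (a < 0 -> forall i : nat, (i < size tau)%N ->
         mu`_i < tau`_i /\ ((i.+1 < size tau)%N -> tau`_i < mu`_i.+1))].
Proof.
move=> /eqP H_herm a_real tau_sorted tauE mu_sorted muE.
have [a0 | a_neq0] := eqVneq a 0.
  have mu_tau : mu = tau.
    by apply: lt_sorted_eq => // x; rewrite muE tauE a0 scale0r addr0.
  by rewrite mu_tau a0 ltxx; split=> // x _; rewrite mul0r addr0 mulr1.
have M_herm : ctr (H + a *: Jmx n) = H + a *: Jmx n.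
  rewrite ctrD ctrZ H_herm (CrealP a_real); congr (_ + _ *: _).
  by apply/matrixP => i k; rewrite !mxE rmorph1.
apply: (secular_interlacing (c := fun j => n%:R * main_angle H tau`_j ^+ 2)) => //.
- by move=> i lt_ir; rewrite (herm_main_eig_real H_herm) // -tauE mem_nth.
- by move=> i lt_ir; rewrite main_angle_sqr_gt0 // -tauE mem_nth.
- by move=> x; rewrite muE => /(herm_main_eig_real M_herm).
- by move=> x; rewrite muE (perturb_main_eigE H_herm (lt_sorted_uniq tau_sorted) tauE).
Qed.
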